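(* Let $p\in(0,1)$ be fixed, $q=1-p$, and let $r>0$ be real. For every integer $m\ge 1$, $$f_r(n)=\frac{np}{(np+q)^{r+1}}\left\{\sum_{k=0}^{m-1}(-1)^k\frac{\mu_k(n-1)}{(np+q)^k}\binom{r+k}{r}+O\!\left(n^{-\lceil m/2\rceil}\right)\right\}\quad\text{as } n\to\infty.$$ Moreover, for each fixed $k$, $\mu_k(n-1)/(np+q)^k=O\!\left(n^{-\lceil k/2\rceil}\right)$ as $n\to\infty$.
   Context: For a positive integer $n$, $p\in(0,1)$, $q=1-p$ and real $r>0$, define $f_r(n)=\sum_{i=1}^n\binom{n}{i}p^iq^{n-i}\,i^{-r}$ (this equals $(1-q^n)\,\mathbb{E}(1/X^r)$ for $X$ a binomial$(n,p)$ variable conditioned to be positive). For integers $N\ge 0$ and $k\ge 0$, $\mu_k(N)=\sum_{i=0}^N\binom{N}{i}p^iq^{N-i}(i-Np)^k$ is the $k$-th central moment of the binomial$(N,p)$ distribution (the sum includes $i=0$). For non-integer $r$, $\binom{r+k}{r}:=(r+1)(r+2)\cdots(r+k)/k!$ (and $=1$ for $k=0$). $\lceil x\rceil$ denotes the ceiling of $x$. *)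

From Stdlib Require Import Arith Reals Lra Lia List.
Open Scope R_scope.

Definition rsum (a len : nat) (F : nat -> R) : R :=
  fold_right Rplus 0 (map F (seq a len)).

Definition f_r (p r : R) (n : nat) : R :=
  rsum 1 n (fun i => C n i * p ^ i * (1 - p) ^ (n - i) / Rpower (INR i) r).

(* k-th central moment of binomial(N,p): sum_{i=0}^N C(N,i) p^i q^(N-i) (i - Np)^k *)
Definition mu (p : R) (k N : nat) : R :=
  rsum 0 (S N) (fun i => C N i * p ^ i * (1 - p) ^ (N - i) * (INR i - INR N * p) ^ k).

(* generalized binomial binom(r+k, r) = (r+1)(r+2)...(r+k)/k!  (= 1 for k = 0) *)
Definition gbinom (r : R) (k : nat) : R :=
  fold_right Rmult 1 (map (fun j => r + INR j) (seq 1 k)) / INR (Factorial.fact k).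

(* ceiling of a real: ceil x = -floor(-x) = 1 - up(-x), since up y is the
   unique integer with y < up y <= y + 1 *)
Definition Rceil (x : R) : Z := (1 - up (- x))%Z.

(* With n = N + 1 and X ~ Bin(N, p), the identity C(n, i) = n/i C(N, i - 1)
   gives f_r(n) = np E[(X + 1)^-(r+1)].  Put a = Np + 1 = np + q and
   x = (X - Np)/a, so that (X + 1)^-(r+1) = a^-(r+1) (1 + x)^-(r+1), and
   expand (1 + x)^-(r+1) by Taylor's formula: since E[x^k] = mu_k(N)/a^k, the
   Taylor polynomial of degree m - 1 produces the displayed sum.
   Splitting Bin(N + 1) = Bin(N) + Bernoulli(p) gives a recursion for the
   central moments, whence mu_k(N) = O(N^floor(k/2)) and
   mu_k(N)/a^k = O(n^-ceil(k/2)).  For the remainder take c = ceil(m/2), using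
   one extra Taylor term when m is odd: on x >= -1/2 it is O(x^2c), and on
   x < -1/2 it is at most (1 + x)^-(r+1) + O(1) <= a^(r+1) + O(1), which is
   dominated by a^(r+1) (2x)^2L; for L large the expectation of that term
   decays like n^-L, faster than the factor a^(r+1) grows. *)

From Stdlib Require Import Reals Lra Lia List.
Open Scope R_scope.

(** * Finite sums *)

Lemma rsum_S a n F : rsum a (S n) F = F a + rsum (S a) n F.
Proof. reflexivity. Qed.

Lemma rsum_last a n F : rsum a (S n) F = rsum a n F + F (a + n)%nat.
Proof.
  revert a; induction n; intros a.
  - unfold rsum; simpl. rewrite Nat.add_0_r; ring.
  - rewrite rsum_S, IHn, rsum_S. replace (S a + n)%nat with (a + S n)%nat by lia. ring.
Qed.

Lemma rsum_shift a n F : rsum (S a) n F = rsum a n (fun i => F (S i)).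
Proof. revert a; induction n; intros a; [reflexivity|]. rewrite !rsum_S, IHn. reflexivity. Qed.

Lemma rsum_ext a n F G :
  (forall i, (a <= i < a + n)%nat -> F i = G i) -> rsum a n F = rsum a n G.
Proof.
  revert a; induction n; intros a H; [reflexivity|].
  rewrite !rsum_S, H, (IHn (S a)); [reflexivity| |]; intros; try apply H; lia.
Qed.

Lemma rsum_plus a n F G : rsum a n (fun i => F i + G i) = rsum a n F + rsum a n G.
Proof. revert a; induction n; intros a; [unfold rsum; simpl; ring|]. rewrite !rsum_S, IHn; ring. Qed.

Lemma rsum_scal a n c F : rsum a n (fun i => c * F i) = c * rsum a n F.
Proof. revert a; induction n; intros a; [unfold rsum; simpl; ring|]. rewrite !rsum_S, IHn; ring. Qed.

Lemma rsum_const0 a n : rsum a n (fun _ => 0) = 0.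
Proof. revert a; induction n; intros a; [reflexivity|]. rewrite rsum_S, IHn; ring. Qed.

Lemma rsum_le a n F G :
  (forall i, (a <= i < a + n)%nat -> F i <= G i) -> rsum a n F <= rsum a n G.
Proof.
  revert a; induction n; intros a H; [unfold rsum; simpl; lra|].
  rewrite !rsum_S. apply Rplus_le_compat; [apply H; lia|].
  apply IHn; intros; apply H; lia.
Qed.

Lemma rsum_abs a n F : Rabs (rsum a n F) <= rsum a n (fun i => Rabs (F i)).
Proof.
  revert a; induction n; intros a; [unfold rsum; simpl; rewrite Rabs_R0; lra|].
  rewrite !rsum_S. eapply Rle_trans; [apply Rabs_triang|].
  apply Rplus_le_compat; [lra|apply IHn].
Qed.

Lemma rsum_nonneg a n F : (forall i, 0 <= F i) -> 0 <= rsum a n F.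
Proof. intros H. rewrite <- (rsum_const0 a n). apply rsum_le; auto. Qed.

Lemma rsum_swap a n b m (G : nat -> nat -> R) :
  rsum a n (fun i => rsum b m (G i)) = rsum b m (fun j => rsum a n (fun i => G i j)).
Proof.
  revert a; induction n; intros a.
  - symmetry. apply rsum_const0.
  - rewrite rsum_S, IHn, <- rsum_plus. apply rsum_ext; intros; rewrite rsum_S; ring.
Qed.

Lemma sum_f_R0_rsum f k : sum_f_R0 f k = rsum 0 (S k) f.
Proof. induction k; [unfold rsum; simpl; ring|]. rewrite rsum_last, <- IHk. reflexivity. Qed.

(** * Expectations under the binomial distribution *)

Definition binom_weight (p : R) (N i : nat) : R := C N i * p ^ i * (1 - p) ^ (N - i).

Definition binom_expect (p : R) (N : nat) (F : nat -> R) : R :=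
  rsum 0 (S N) (fun i => binom_weight p N i * F i).

Lemma mu_binom_expect p k N : mu p k N = binom_expect p N (fun i => (INR i - INR N * p) ^ k).
Proof. reflexivity. Qed.

Lemma C_n0 n : C n 0 = 1.
Proof. unfold C; simpl. rewrite Nat.sub_0_r. field. apply INR_fact_neq_0. Qed.

Lemma C_nn n : C n n = 1.
Proof. unfold C; rewrite Nat.sub_diag; simpl. field. apply INR_fact_neq_0. Qed.

Lemma C_nonneg n i : 0 <= C n i.
Proof.
  unfold C. apply Rle_mult_inv_pos; [apply pos_INR|].
  apply Rmult_lt_0_compat; apply INR_fact_lt_0.
Qed.

Lemma C_SS N i : C (S N) (S i) = INR (S N) / INR (S i) * C N i.
Proof.
  unfold C. rewrite !fact_simpl, !mult_INR. simpl (S N - S i)%nat.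
  assert (INR (S i) <> 0) by (apply not_0_INR; lia).
  assert (INR (S N) <> 0) by (apply not_0_INR; lia).
  pose proof (INR_fact_neq_0 i). pose proof (INR_fact_neq_0 (N - i)).
  pose proof (INR_fact_neq_0 N).
  field. repeat split; auto.
Qed.

Section BinomialExpectation.
Variable p : R.

Lemma binom_expect_ext N F G : (forall i, F i = G i) -> binom_expect p N F = binom_expect p N G.
Proof. intros H; unfold binom_expect; apply rsum_ext; intros; rewrite H; ring. Qed.

Lemma binom_expect_plus N F G :
  binom_expect p N (fun i => F i + G i) = binom_expect p N F + binom_expect p N G.
Proof. unfold binom_expect. rewrite <- rsum_plus. apply rsum_ext; intros; ring. Qed.

Lemma binom_expect_scal N c F : binom_expect p N (fun i => c * F i) = c * binom_expect p N F.
Proof. unfold binom_expect. rewrite <- rsum_scal. apply rsum_ext; intros; ring. Qed.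

Lemma binom_expect_minus N F G :
  binom_expect p N (fun i => F i - G i) = binom_expect p N F - binom_expect p N G.
Proof.
  rewrite (binom_expect_ext N _ (fun i => F i + (-1) * G i)) by (intros; ring).
  rewrite binom_expect_plus, binom_expect_scal. ring.
Qed.

Lemma binom_expect_rsum N a n G :
  binom_expect p N (fun i => rsum a n (G i)) = rsum a n (fun j => binom_expect p N (fun i => G i j)).
Proof.
  unfold binom_expect. rewrite <- rsum_swap. apply rsum_ext; intros. rewrite <- rsum_scal. reflexivity.
Qed.

(* Pascal's rule: Bin(N + 1) is Bin(N) plus an independent Bernoulli(p). *)
Lemma binom_expect_S N F :
  binom_expect p (S N) F = (1 - p) * binom_expect p N F + p * binom_expect p N (fun i => F (S i)).
Proof.
  unfold binom_expect. rewrite rsum_S, rsum_shift, rsum_last.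
  rewrite (rsum_S 0 N (fun i => binom_weight p N i * F i)), rsum_shift.
  rewrite (rsum_last 0 N (fun i => binom_weight p N i * F (S i))).
  rewrite (rsum_ext 0 N (fun i => binom_weight p (S N) (S i) * F (S i))
            (fun i => p * (binom_weight p N i * F (S i))
                      + (1 - p) * (binom_weight p N (S i) * F (S i)))).
  2:{ intros i Hi. unfold binom_weight. rewrite <- pascal by lia.
      replace (S N - S i)%nat with (S (N - S i)) by lia.
      replace (N - i)%nat with (S (N - S i)) by lia. simpl. ring. }
  rewrite rsum_plus, !rsum_scal.
  unfold binom_weight. rewrite !C_n0, !Nat.add_0_l, !C_nn, !Nat.sub_diag, !Nat.sub_0_r. simpl. ring.
Qed.

Hypothesis p_ge0 : 0 <= p.
Hypothesis p_le1 : p <= 1.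

Lemma binom_weight_nonneg N i : 0 <= binom_weight p N i.
Proof.
  unfold binom_weight.
  apply Rmult_le_pos; [apply Rmult_le_pos|]; [apply C_nonneg| |]; apply pow_le; lra.
Qed.

Lemma binom_expect_le N F G : (forall i, F i <= G i) -> binom_expect p N F <= binom_expect p N G.
Proof.
  intros H; unfold binom_expect; apply rsum_le; intros.
  apply Rmult_le_compat_l; [apply binom_weight_nonneg|apply H].
Qed.

Lemma binom_expect_abs N F : Rabs (binom_expect p N F) <= binom_expect p N (fun i => Rabs (F i)).
Proof.
  unfold binom_expect. eapply Rle_trans; [apply rsum_abs|]. apply rsum_le; intros.
  rewrite Rabs_mult, (Rabs_right (binom_weight p N i)); [lra|].
  apply Rle_ge, binom_weight_nonneg.
Qed.

End BinomialExpectation.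

(** * Growth of the central moments *)

Definition bernoulli_moment (p : R) (t : nat) : R := (1 - p) * (- p) ^ t + p * (1 - p) ^ t.

Lemma mu_S p k N :
  mu p k (S N) = rsum 0 (S k) (fun j => C k j * bernoulli_moment p (k - j) * mu p j N).
Proof.
  rewrite mu_binom_expect, binom_expect_S.
  rewrite (binom_expect_ext p N _ (fun i => rsum 0 (S k)
             (fun j => C k j * (INR i - INR N * p) ^ j * (- p) ^ (k - j)))).
  2:{ intros i. rewrite <- sum_f_R0_rsum, <- binomial. rewrite ?S_INR; f_equal; ring. }
  rewrite (binom_expect_ext p N (fun i => (INR (S i) - INR (S N) * p) ^ k)
             (fun i => rsum 0 (S k) (fun j => C k j * (INR i - INR N * p) ^ j * (1 - p) ^ (k - j)))).
  2:{ intros i. rewrite <- sum_f_R0_rsum, <- binomial. rewrite ?S_INR; f_equal; ring. }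
  rewrite !binom_expect_rsum, <- !rsum_scal, <- rsum_plus. apply rsum_ext; intros j _.
  rewrite (binom_expect_ext p N _ (fun i => (C k j * (-p) ^ (k - j)) * (INR i - INR N * p) ^ j))
    by (intros; ring).
  rewrite (binom_expect_ext p N (fun i => C k j * (INR i - INR N * p) ^ j * (1 - p) ^ (k - j))
             (fun i => (C k j * (1 - p) ^ (k - j)) * (INR i - INR N * p) ^ j)) by (intros; ring).
  rewrite !binom_expect_scal, <- !mu_binom_expect. unfold bernoulli_moment. ring.
Qed.

(* The terms j = k and j = k - 1 of the recursion cancel against mu_k(N) and
   vanish, the Bernoulli moments of order 0 and 1 being 1 and 0. *)
Lemma mu_S_sub p k N :
  mu p k (S N) - mu p k N = rsum 0 (k - 1) (fun j => C k j * bernoulli_moment p (k - j) * mu p j N).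
Proof.
  rewrite mu_S. destruct k as [|k].
  - unfold rsum; simpl. rewrite C_n0. unfold bernoulli_moment; simpl. ring.
  - rewrite rsum_last, rsum_last. simpl (0 + _)%nat. rewrite C_nn, Nat.sub_diag.
    replace (S k - k)%nat with 1%nat by lia. replace (S k - 1)%nat with k by lia.
    unfold bernoulli_moment; simpl. ring.
Qed.

Lemma pow_abs_le1 x t : Rabs x <= 1 -> Rabs (x ^ t) <= 1.
Proof.
  intros H. rewrite <- RPow_abs, <- (pow1 t). apply pow_incr. split; [apply Rabs_pos|lra].
Qed.

Lemma bernoulli_moment_abs_le1 p t : 0 <= p <= 1 -> Rabs (bernoulli_moment p t) <= 1.
Proof.
  intros Hp. unfold bernoulli_moment. eapply Rle_trans; [apply Rabs_triang|].
  rewrite !Rabs_mult, (Rabs_right (1 - p)), (Rabs_right p) by lra.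
  assert (H1 : Rabs ((- p) ^ t) <= 1) by (apply pow_abs_le1; rewrite Rabs_Ropp, Rabs_right; lra).
  assert (H2 : Rabs ((1 - p) ^ t) <= 1) by (apply pow_abs_le1; rewrite Rabs_right; lra).
  pose proof (Rabs_pos ((- p) ^ t)). pose proof (Rabs_pos ((1 - p) ^ t)). nra.
Qed.

Lemma telescope_pow_bound (u : nat -> R) (B : R) (d : nat) : 0 <= B ->
  (forall N, Rabs (u (S N) - u N) <= B * INR (S N) ^ d) ->
  forall N, Rabs (u N) <= (Rabs (u 0%nat) + B) * INR (S N) ^ S d.
Proof.
  intros HB Hinc.
  assert (Hsum : forall N, Rabs (u N) <= Rabs (u 0%nat) + B * INR N ^ S d).
  { induction N as [|N IH].
    - simpl. rewrite Rmult_0_l, Rmult_0_r. lra.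
    - assert (Htri : Rabs (u (S N)) <= Rabs (u N) + Rabs (u (S N) - u N)).
      { replace (u (S N)) with (u N + (u (S N) - u N)) at 1 by ring. apply Rabs_triang. }
      assert (Hpow : INR N ^ S d + INR (S N) ^ d <= INR (S N) ^ S d).
      { pose proof (pos_INR N). rewrite S_INR. simpl pow.
        assert (INR N ^ d <= (INR N + 1) ^ d) by (apply pow_incr; lra).
        pose proof (pow_le (INR N) d (pos_INR N)). nra. }
      specialize (Hinc N). nra. }
  intros N. pose proof (pos_INR N). pose proof (Rabs_pos (u 0%nat)).
  assert (H1 : 1 <= INR (S N) ^ S d) by (apply pow_R1_Rle; rewrite S_INR; lra).
  assert (H2 : INR N ^ S d <= INR (S N) ^ S d) by (apply pow_incr; rewrite S_INR; lra).
  specialize (Hsum N). nra.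
Qed.

Section CentralMoments.
Variable p : R.
Hypothesis p_ge0 : 0 <= p.
Hypothesis p_le1 : p <= 1.

Lemma mu_S_sub_bound k K : 0 <= K ->
  (forall j N, (j < k)%nat -> Rabs (mu p j N) <= K * INR (S N) ^ (j / 2)) ->
  forall N, Rabs (mu p k (S N) - mu p k N)
            <= K * rsum 0 (k - 1) (C k) * INR (S N) ^ ((k - 2) / 2).
Proof.
  intros HK IH N. rewrite mu_S_sub. eapply Rle_trans; [apply rsum_abs|].
  rewrite Rmult_assoc, (Rmult_comm (rsum _ _ _)), <- Rmult_assoc, <- rsum_scal.
  apply rsum_le. intros j Hj. rewrite !Rabs_mult, (Rabs_right (C k j)) by (apply Rle_ge, C_nonneg).
  pose proof (bernoulli_moment_abs_le1 p (k - j) (conj p_ge0 p_le1)).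
  pose proof (IH j N ltac:(lia)).
  assert (INR (S N) ^ (j / 2) <= INR (S N) ^ ((k - 2) / 2)).
  { apply Rle_pow; [rewrite S_INR; pose proof (pos_INR N); lra|].
    apply Nat.Div0.div_le_mono; lia. }
  pose proof (C_nonneg k j). pose proof (Rabs_pos (bernoulli_moment p (k - j))).
  pose proof (Rabs_pos (mu p j N)).
  assert (Rabs (bernoulli_moment p (k - j)) * Rabs (mu p j N) <= K * INR (S N) ^ ((k - 2) / 2))
    by nra.
  rewrite Rmult_assoc, (Rmult_comm (K * _)). apply Rmult_le_compat_l; lra.
Qed.

Lemma mu_growth_step k K : 0 <= K ->
  (forall j N, (j < k)%nat -> Rabs (mu p j N) <= K * INR (S N) ^ (j / 2)) ->
  exists K', 0 <= K' /\ forall N, Rabs (mu p k N) <= K' * INR (S N) ^ (k / 2).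
Proof.
  intros HK IH. pose proof (mu_S_sub_bound k K HK IH) as Hinc.
  destruct (Nat.lt_ge_cases k 2) as [Hk|Hk].
  - exists (Rabs (mu p k 0)). split; [apply Rabs_pos|].
    assert (Hconst : forall N, mu p k N = mu p k 0).
    { induction N as [|N IHN]; [reflexivity|]. rewrite <- IHN. apply Rminus_diag_uniq.
      rewrite mu_S_sub. replace (k - 1)%nat with 0%nat by lia. reflexivity. }
    intros N. rewrite Hconst. replace (k / 2)%nat with 0%nat by (destruct k as [|[|]]; simpl; lia).
    simpl. lra.
  - set (B := K * rsum 0 (k - 1) (C k)).
    assert (HB : 0 <= B) by (apply Rmult_le_pos; [lra|apply rsum_nonneg, C_nonneg]).
    exists (Rabs (mu p k 0) + B). split; [pose proof (Rabs_pos (mu p k 0)); lra|].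
    replace (k / 2)%nat with (S ((k - 2) / 2)).
    + exact (telescope_pow_bound (mu p k) B ((k - 2) / 2) HB Hinc).
    + replace k with (1 * 2 + (k - 2))%nat at 2 by lia. now rewrite Nat.div_add_l.
Qed.

Lemma mu_bound k : exists K, 0 <= K /\
  forall j N, (j <= k)%nat -> Rabs (mu p j N) <= K * INR (S N) ^ (j / 2).
Proof.
  induction k as [|k [K [HK H]]].
  - destruct (mu_growth_step 0 0 ltac:(lra) ltac:(intros; lia)) as [K [HK H]].
    exists K; split; auto. intros j N Hj. replace j with 0%nat by lia. apply H.
  - destruct (mu_growth_step (S k) K HK ltac:(intros; apply H; lia)) as [K' [HK' H']].
    exists (Rmax K K'). split; [eapply Rle_trans; [apply HK|apply Rmax_l]|].
    intros j N Hj. pose proof (pow_le (INR (S N)) (j / 2) (pos_INR _)).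
    destruct (Nat.eq_dec j (S k)) as [->|Hne].
    + eapply Rle_trans; [apply H'|]. apply Rmult_le_compat_r; [auto|apply Rmax_r].
    + eapply Rle_trans; [apply H; lia|]. apply Rmult_le_compat_r; [auto|apply Rmax_l].
Qed.

End CentralMoments.

Lemma half_add_half_up k : (k / 2 + (k + 1) / 2 = k)%nat.
Proof.
  pose proof (Nat.div_mod k 2). pose proof (Nat.div_mod (k + 1) 2).
  pose proof (Nat.mod_upper_bound k 2). pose proof (Nat.mod_upper_bound (k + 1) 2). lia.
Qed.

Lemma half_up_double c : ((2 * c + 1) / 2 = c)%nat.
Proof. rewrite Nat.mul_comm, Nat.div_add_l by lia. simpl; lia. Qed.

Lemma double_half_up m : (2 * ((m + 1) / 2) = m \/ 2 * ((m + 1) / 2) = S m)%nat.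
Proof. pose proof (Nat.div_mod (m + 1) 2). pose proof (Nat.mod_upper_bound (m + 1) 2). lia. Qed.

(* Np + 1 >= p (N + 1), and floor(k/2) - k = -ceil(k/2). *)
Lemma mu_normalized_bound p k : 0 < p <= 1 -> exists Cst, 0 <= Cst /\ forall N,
  Rabs (mu p k N / (INR N * p + 1) ^ k) <= Cst / INR (S N) ^ ((k + 1) / 2).
Proof.
  intros Hp. destruct (mu_bound p ltac:(lra) ltac:(lra) k) as [K [HK H]].
  exists (K / p ^ k). split; [apply Rle_mult_inv_pos; [lra|apply pow_lt; lra]|].
  intros N. specialize (H k N (le_n k)).
  assert (Hn : 0 < INR (S N)) by (apply lt_0_INR; lia).
  assert (Ha : p * INR (S N) <= INR N * p + 1) by (rewrite S_INR; nra).
  unfold Rdiv. rewrite Rabs_mult, Rabs_inv, (Rabs_right (_ ^ k)) by (apply Rle_ge, pow_le; nra).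
  apply Rle_trans with (K * INR (S N) ^ (k / 2) * / (p * INR (S N)) ^ k).
  - apply Rmult_le_compat; auto using Rabs_pos.
    + left; apply Rinv_0_lt_compat, pow_lt; nra.
    + apply Rinv_le_contravar; [apply pow_lt; nra|]. apply pow_incr; split; [nra|lra].
  - rewrite Rpow_mult_distr.
    replace (INR (S N) ^ k) with (INR (S N) ^ (k / 2) * INR (S N) ^ ((k + 1) / 2))
      by (rewrite <- pow_add, half_add_half_up; reflexivity).
    assert (0 < INR (S N) ^ (k / 2)) by (apply pow_lt; lra).
    assert (0 < INR (S N) ^ ((k + 1) / 2)) by (apply pow_lt; lra).
    assert (0 < p ^ k) by (apply pow_lt; lra).
    right. field. repeat split; lra.
Qed.

(** * Taylor expansion of (1 + x)^-s *)

Fixpoint rising (s : R) (k : nat) : R :=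
  match k with O => 1 | S k => s * rising (s + 1) k end.

Definition taylor_coef (s : R) (k : nat) : R := (-1) ^ k * rising s k / INR (Factorial.fact k).

Definition taylor_poly (s : R) (M : nat) (x : R) : R :=
  rsum 0 M (fun k => taylor_coef s k * x ^ k).

Definition pow1p_neg (s x : R) : R := Rpower (1 + x) (- s).

Lemma Rpower_1_l s : Rpower 1 s = 1.
Proof. unfold Rpower. rewrite ln_1, Rmult_0_r. apply exp_0. Qed.

Lemma pow1p_neg_pos s x : 0 < pow1p_neg s x.
Proof. apply exp_pos. Qed.

Lemma pow1p_neg_0 s : pow1p_neg s 0 = 1.
Proof. unfold pow1p_neg. rewrite Rplus_0_r. apply Rpower_1_l. Qed.

Lemma pow1p_neg_derive s x : -1 < x -> derivable_pt_lim (pow1p_neg s) x (- s * pow1p_neg (s + 1) x).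
Proof.
  intros Hx.
  assert (H1 : derivable_pt_lim (fun y => 1 + y) x 1).
  { pose proof (derivable_pt_lim_plus (fct_cte 1) id x 0 1
                  (derivable_pt_lim_const 1 x) (derivable_pt_lim_id x)) as H.
    rewrite Rplus_0_l in H. exact H. }
  pose proof (derivable_pt_lim_comp _ _ _ _ _ H1 (derivable_pt_lim_power (1 + x) (- s) ltac:(lra))) as H.
  unfold pow1p_neg. replace (- (s + 1)) with (- s - 1) by ring. rewrite <- (Rmult_1_r (- s * _)).
  exact H.
Qed.

Lemma taylor_poly_S s M x :
  taylor_poly s (S M) x = taylor_poly s M x + taylor_coef s M * x ^ M.
Proof. apply rsum_last. Qed.

Lemma taylor_coef_S s M : taylor_coef s (S M) * INR (S M) = - s * taylor_coef (s + 1) M.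
Proof.
  unfold taylor_coef. simpl rising. rewrite fact_simpl, mult_INR. simpl pow.
  assert (INR (S M) <> 0) by (apply not_0_INR; lia). pose proof (INR_fact_neq_0 M).
  field. split; auto.
Qed.

Lemma taylor_poly_derive s M x :
  derivable_pt_lim (taylor_poly s (S M)) x (- s * taylor_poly (s + 1) M x).
Proof.
  induction M as [|M IHM].
  - apply (derivable_pt_lim_ext (fct_cte (taylor_coef s 0))).
    + intros z. unfold taylor_poly, rsum, fct_cte. simpl. ring.
    + unfold taylor_poly, rsum. simpl. rewrite Rmult_0_r. apply derivable_pt_lim_const.
  - apply (derivable_pt_lim_ext (fun y => taylor_poly s (S M) y + taylor_coef s (S M) * y ^ S M)).
    { intros z. symmetry. apply taylor_poly_S. }
    rewrite taylor_poly_S, Rmult_plus_distr_l.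
    replace (- s * (taylor_coef (s + 1) M * x ^ M))
      with (taylor_coef s (S M) * (INR (S M) * x ^ pred (S M)))
      by (simpl pred; rewrite <- Rmult_assoc, taylor_coef_S; ring).
    apply (derivable_pt_lim_plus (taylor_poly s (S M)) (fun y => taylor_coef s (S M) * y ^ S M));
      [exact IHM|].
    apply (derivable_pt_lim_scal (fun y => y ^ S M)), derivable_pt_lim_pow.
Qed.

Lemma taylor_poly_at0 s M : taylor_poly s (S M) 0 = 1.
Proof.
  unfold taylor_poly. rewrite rsum_S, rsum_shift.
  rewrite (rsum_ext 0 M _ (fun _ => 0)) by (intros; simpl; ring).
  rewrite rsum_const0. unfold taylor_coef. simpl. field.
Qed.

Lemma taylor_poly_abs_le s M x :
  Rabs x <= 1 -> Rabs (taylor_poly s M x) <= rsum 0 M (fun k => Rabs (taylor_coef s k)).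
Proof.
  intros Hx. eapply Rle_trans; [apply rsum_abs|]. apply rsum_le; intros k _.
  rewrite Rabs_mult. pose proof (pow_abs_le1 x k Hx). pose proof (Rabs_pos (taylor_coef s k)).
  pose proof (Rabs_pos (x ^ k)). nra.
Qed.

(* The remainder of order M + 1 for the exponent s has derivative -s times the
   remainder of order M for s + 1; the mean value theorem then bounds it. *)
Lemma taylor_remainder_mvt s M x : -1/2 <= x -> exists c, -1/2 <= c /\ Rabs c <= Rabs x /\
  pow1p_neg s x - taylor_poly s (S M) x
  = - s * (pow1p_neg (s + 1) c - taylor_poly (s + 1) M c) * x.
Proof.
  intros Hx.
  set (f := fun y => pow1p_neg s y - taylor_poly s (S M) y).
  set (f' := fun y => - s * (pow1p_neg (s + 1) y - taylor_poly (s + 1) M y)).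
  assert (Hd : forall c, -1 < c -> derivable_pt_lim f c (f' c)).
  { intros c Hc. unfold f'. rewrite Rmult_minus_distr_l.
    exact (derivable_pt_lim_minus _ _ c _ _ (pow1p_neg_derive s c Hc) (taylor_poly_derive s M c)). }
  assert (Hf0 : f 0 = 0) by (unfold f; rewrite pow1p_neg_0, taylor_poly_at0; ring).
  change (exists c, -1/2 <= c /\ Rabs c <= Rabs x /\ f x = f' c * x).
  destruct (Rtotal_order x 0) as [Hlt|[->|Hgt]].
  - destruct (MVT_cor2 f f' x 0 Hlt) as [c [Hc1 Hc2]]; [intros c Hc; apply Hd; lra|].
    exists c. rewrite !Rabs_left1 by lra. split; [lra|]. split; lra.
  - exists 0. rewrite Hf0. split; [lra|]. split; [lra|ring].
  - destruct (MVT_cor2 f f' 0 x Hgt) as [c [Hc1 Hc2]]; [intros c Hc; apply Hd; lra|].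
    exists c. rewrite !Rabs_right by lra. split; [lra|]. split; lra.
Qed.

Lemma taylor_remainder_bound M : forall s, 0 < s -> exists K, 0 <= K /\
  forall x, -1/2 <= x -> Rabs (pow1p_neg s x - taylor_poly s M x) <= K * Rabs x ^ M.
Proof.
  induction M as [|M IHM]; intros s Hs.
  - exists (Rpower (1/2) (- s)). split; [left; apply exp_pos|].
    intros x Hx. unfold taylor_poly, rsum. simpl. rewrite Rminus_0_r, Rmult_1_r.
    rewrite Rabs_right by (left; apply pow1p_neg_pos). unfold pow1p_neg. rewrite !Rpower_Ropp.
    apply Rinv_le_contravar; [apply exp_pos|]. apply Rle_Rpower_l; lra.
  - destruct (IHM (s + 1) ltac:(lra)) as [K [HK H]].
    exists (s * K). split; [nra|]. intros x Hx.
    destruct (taylor_remainder_mvt s M x Hx) as [c [Hc1 [Hc2 ->]]].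
    rewrite !Rabs_mult, Rabs_Ropp, (Rabs_right s) by lra.
    specialize (H c Hc1).
    assert (Rabs c ^ M <= Rabs x ^ M) by (apply pow_incr; split; [apply Rabs_pos|lra]).
    assert (HR : Rabs (pow1p_neg (s + 1) c - taylor_poly (s + 1) M c) <= K * Rabs x ^ M).
    { eapply Rle_trans; [exact H|]. apply Rmult_le_compat_l; lra. }
    pose proof (Rabs_pos x). pose proof (Rabs_pos (pow1p_neg (s + 1) c - taylor_poly (s + 1) M c)).
    simpl pow. replace (s * K * (Rabs x * Rabs x ^ M)) with (s * (K * Rabs x ^ M) * Rabs x) by ring.
    apply Rmult_le_compat_r; [lra|]. apply Rmult_le_compat_l; lra.
Qed.

Lemma even_pow_nonneg x c : 0 <= x ^ (2 * c).
Proof. rewrite pow_mult. apply pow_le. nra. Qed.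

(* Below -1/2 the Taylor bound fails, but there 4^L x^(2L) >= 1 dominates the
   crude bound |(1 + x)^-s| + |T(x)|. *)
Lemma taylor_remainder_even_bound s c L : 0 < s -> exists K K', 0 <= K /\ 0 <= K' /\
  forall x, -1 <= x -> Rabs (pow1p_neg s x - taylor_poly s (2 * c) x)
                       <= K * x ^ (2 * c) + (pow1p_neg s x + K') * (4 ^ L * x ^ (2 * L)).
Proof.
  intros Hs. destruct (taylor_remainder_bound (2 * c) s Hs) as [K [HK HT]].
  set (K' := rsum 0 (2 * c) (fun k => Rabs (taylor_coef s k))).
  assert (HK' : 0 <= K') by (apply rsum_nonneg; intros; apply Rabs_pos).
  exists K, K'. split; [exact HK|]. split; [exact HK'|].
  intros x Hx.
  assert (H4 : 0 <= 4 ^ L * x ^ (2 * L))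
    by (apply Rmult_le_pos; [apply pow_le; lra|apply even_pow_nonneg]).
  pose proof (pow1p_neg_pos s x). pose proof (even_pow_nonneg x c).
  destruct (Rle_or_lt (-1/2) x) as [Hx2|Hx2].
  - eapply Rle_trans; [apply HT; exact Hx2|].
    rewrite RPow_abs, Rabs_right by (apply Rle_ge, even_pow_nonneg).
    assert (0 <= (pow1p_neg s x + K') * (4 ^ L * x ^ (2 * L))) by (apply Rmult_le_pos; lra).
    lra.
  - assert (H1 : 1 <= 4 ^ L * x ^ (2 * L)).
    { rewrite pow_mult, <- Rpow_mult_distr. apply pow_R1_Rle. simpl. nra. }
    eapply Rle_trans; [apply Rabs_triang|]. rewrite Rabs_Ropp, Rabs_right by lra.
    assert (Rabs (taylor_poly s (2 * c) x) <= K')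
      by (apply taylor_poly_abs_le, Rabs_le; lra).
    assert (0 <= K * x ^ (2 * c)) by (apply Rmult_le_pos; lra).
    assert (pow1p_neg s x + K' <= (pow1p_neg s x + K') * (4 ^ L * x ^ (2 * L))) by nra.
    lra.
Qed.

Lemma rising_gbinom r k :
  fold_right Rmult 1 (map (fun j => r + INR j) (seq 1 k)) = rising (r + 1) k.
Proof.
  enough (H : forall a, fold_right Rmult 1 (map (fun j => r + INR j) (seq (S a) k))
                        = rising (r + 1 + INR a) k)
    by (rewrite <- (Rplus_0_r (r + 1)); exact (H 0%nat)).
  induction k as [|k IHk]; intros a; [reflexivity|].
  cbn [seq map fold_right rising]. rewrite IHk, !S_INR. f_equal; [ring|]. f_equal. ring.
Qed.

Lemma taylor_coef_gbinom r k : taylor_coef (r + 1) k = (-1) ^ k * gbinom r k.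
Proof. unfold taylor_coef, gbinom. rewrite rising_gbinom. unfold Rdiv. ring. Qed.

(** * The expansion of f_r *)

Lemma f_r_binom_expect p r N :
  f_r p r (S N) = INR (S N) * p * binom_expect p N (fun i => / Rpower (INR i + 1) (r + 1)).
Proof.
  unfold f_r. rewrite rsum_shift. unfold binom_expect. rewrite <- rsum_scal.
  apply rsum_ext; intros i _.
  rewrite C_SS. unfold binom_weight. simpl (S N - S i)%nat.
  pose proof (pos_INR i). pose proof (pos_INR N). pose proof (exp_pos (r * ln (INR i + 1))).
  rewrite Rpower_plus, Rpower_1, !S_INR by lra. simpl pow. unfold Rpower in *. field. lra.
Qed.

Section Centered.
Variable p : R.
Hypothesis p_gt0 : 0 < p.
Hypothesis p_le1 : p <= 1.

Definition centered (N i : nat) : R := (INR i - INR N * p) / (INR N * p + 1).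

Lemma scale_pos N : 0 < INR N * p + 1.
Proof. pose proof (pos_INR N). nra. Qed.

Lemma binom_expect_centered_pow N j :
  binom_expect p N (fun i => centered N i ^ j) = mu p j N / (INR N * p + 1) ^ j.
Proof.
  pose proof (scale_pos N).
  rewrite (binom_expect_ext p N _ (fun i => / (INR N * p + 1) ^ j * (INR i - INR N * p) ^ j)).
  - rewrite binom_expect_scal, <- mu_binom_expect. unfold Rdiv; ring.
  - intros i. unfold centered, Rdiv. rewrite Rpow_mult_distr, pow_inv. ring.
Qed.

Lemma binom_expect_taylor_poly s N m :
  binom_expect p N (fun i => taylor_poly s m (centered N i))
  = rsum 0 m (fun k => taylor_coef s k * (mu p k N / (INR N * p + 1) ^ k)).
Proof.
  unfold taylor_poly. rewrite binom_expect_rsum. apply rsum_ext; intros k _.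
  rewrite binom_expect_scal, binom_expect_centered_pow. reflexivity.
Qed.

Lemma centered_gt (N i : nat) : -1 < centered N i.
Proof.
  pose proof (scale_pos N). pose proof (pos_INR i). unfold centered.
  apply Rmult_lt_reg_r with (INR N * p + 1); auto.
  unfold Rdiv. rewrite Rmult_assoc, Rinv_l by lra. lra.
Qed.

Lemma pow1p_neg_centered s N i :
  pow1p_neg s (centered N i) = Rpower (INR N * p + 1) s * / Rpower (INR i + 1) s.
Proof.
  pose proof (scale_pos N). pose proof (pos_INR i).
  unfold pow1p_neg. replace (1 + centered N i) with ((INR i + 1) * / (INR N * p + 1))
    by (unfold centered; field; lra).
  rewrite Rpower_Ropp, <- Rpower_mult_distr by (try apply Rinv_0_lt_compat; lra).
  replace (Rpower (/ (INR N * p + 1)) s) with (/ Rpower (INR N * p + 1) s).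
  - rewrite Rinv_mult, Rinv_inv. ring.
  - unfold Rpower. rewrite ln_Rinv, <- exp_Ropp by lra. f_equal. ring.
Qed.

Lemma pow1p_neg_centered_le s N i z : 0 < s -> s <= INR z ->
  pow1p_neg s (centered N i) <= INR (S N) ^ z.
Proof.
  intros Hs Hz. pose proof (scale_pos N). pose proof (pos_INR i). pose proof (pos_INR N).
  rewrite pow1p_neg_centered, <- Rpower_pow by (rewrite S_INR; lra).
  assert (Hi : 1 <= Rpower (INR i + 1) s).
  { rewrite <- (Rpower_1_l s) at 1. apply Rle_Rpower_l; lra. }
  apply Rle_trans with (Rpower (INR N * p + 1) s).
  - assert (0 < Rpower (INR N * p + 1) s) by apply exp_pos.
    pose proof (Rinv_le_contravar 1 _ Rlt_0_1 Hi) as Hinv. rewrite Rinv_1 in Hinv.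
    nra.
  - apply Rle_trans with (Rpower (INR (S N)) s).
    + apply Rle_Rpower_l; [lra|]. rewrite S_INR. nra.
    + apply Rle_Rpower; [rewrite S_INR|]; lra.
Qed.

Lemma even_remainder_expect_le_moments s c L z : 0 < s -> s <= INR z ->
  exists K K', 0 <= K /\ 0 <= K' /\ forall N,
  Rabs (binom_expect p N (fun i => pow1p_neg s (centered N i) - taylor_poly s (2 * c) (centered N i)))
  <= K * (mu p (2 * c) N / (INR N * p + 1) ^ (2 * c))
     + (INR (S N) ^ z + K') * 4 ^ L * (mu p (2 * L) N / (INR N * p + 1) ^ (2 * L)).
Proof.
  intros Hs Hz. destruct (taylor_remainder_even_bound s c L Hs) as [K [K' [HK [HK' Hpw]]]].
  exists K, K'. split; [exact HK|]. split; [exact HK'|]. intros N.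
  eapply Rle_trans; [apply binom_expect_abs; lra|].
  eapply Rle_trans.
  - apply binom_expect_le; [lra|lra|]. intros i.
    eapply Rle_trans; [apply Hpw; left; apply centered_gt|].
    apply Rplus_le_compat_l, Rmult_le_compat_r.
    + apply Rmult_le_pos; [apply pow_le; lra|apply even_pow_nonneg].
    + apply Rplus_le_compat_r, (pow1p_neg_centered_le s N i z); lra.
  - right. rewrite binom_expect_plus, binom_expect_scal.
    rewrite (binom_expect_ext p N (fun i => (INR (S N) ^ z + K') * (4 ^ L * centered N i ^ (2 * L)))
               (fun i => ((INR (S N) ^ z + K') * 4 ^ L) * centered N i ^ (2 * L)))
      by (intros; ring).
    rewrite binom_expect_scal, !binom_expect_centered_pow. ring.
Qed.

(* L = c + z with z >= s makes E[(2x)^2L] = O(n^-(c+z)) absorb the factor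
   a^s <= n^z carried by the remainder on x < -1/2. *)
Lemma even_remainder_expect_bound s c : 0 < s -> exists Cst, forall N,
  Rabs (binom_expect p N (fun i => pow1p_neg s (centered N i) - taylor_poly s (2 * c) (centered N i)))
  <= Cst / INR (S N) ^ c.
Proof.
  intros Hs. destruct (INR_archimed 1 s ltac:(lra)) as [z Hz]. rewrite Rmult_1_r in Hz.
  set (L := (c + z)%nat).
  destruct (even_remainder_expect_le_moments s c L z Hs ltac:(lra)) as [K [K' [HK [HK' Hexp]]]].
  destruct (mu_normalized_bound p (2 * c) ltac:(lra)) as [CM [HCM HMr]].
  destruct (mu_normalized_bound p (2 * L) ltac:(lra)) as [CL [HCL HLr]].
  rewrite half_up_double in HMr, HLr.
  exists (K * CM + (1 + K') * 4 ^ L * CL). intros N.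
  specialize (Hexp N). specialize (HMr N). specialize (HLr N).
  set (n := INR (S N)) in *. set (a := INR N * p + 1) in *.
  assert (Hn : 1 <= n) by (unfold n; rewrite S_INR; pose proof (pos_INR N); lra).
  assert (Hnz : 1 <= n ^ z) by (apply pow_R1_Rle; lra).
  assert (Hnc : 0 < n ^ c) by (apply pow_lt; lra).
  assert (H4L : 0 <= 4 ^ L) by (apply pow_le; lra).
  set (Q := / n ^ c). set (P := / n ^ z).
  assert (HQ : 0 < Q) by (apply Rinv_0_lt_compat; lra).
  assert (HP : 0 < P) by (apply Rinv_0_lt_compat; lra).
  assert (BM : mu p (2 * c) N / a ^ (2 * c) <= CM * Q)
    by (eapply Rle_trans; [apply Rle_abs|exact HMr]).
  assert (BL : mu p (2 * L) N / a ^ (2 * L) <= CL * Q * P).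
  { eapply Rle_trans; [apply Rle_abs|]. eapply Rle_trans; [exact HLr|].
    unfold L, Q, P, Rdiv. rewrite pow_add, Rinv_mult. right. ring. }
  assert (Hz1 : (n ^ z + K') * P <= 1 + K').
  { unfold P. rewrite Rmult_plus_distr_r, Rinv_r by lra.
    pose proof (Rinv_le_contravar 1 _ Rlt_0_1 Hnz) as Hinv. rewrite Rinv_1 in Hinv. nra. }
  eapply Rle_trans; [apply Hexp|]. unfold Rdiv. fold Q.
  assert (0 <= K * (CM * Q - mu p (2 * c) N / a ^ (2 * c))) by (apply Rmult_le_pos; lra).
  assert (0 <= (n ^ z + K') * 4 ^ L * (CL * Q * P - mu p (2 * L) N / a ^ (2 * L)))
    by (apply Rmult_le_pos; [apply Rmult_le_pos|]; lra).
  assert (0 <= (1 + K' - (n ^ z + K') * P) * (4 ^ L * CL * Q))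
    by (apply Rmult_le_pos; [lra|apply Rmult_le_pos; [apply Rmult_le_pos|]; lra]).
  nra.
Qed.

(* For odd m the Taylor polynomial of degree 2c - 1 = m carries one extra term,
   of size O(mu_m/a^m) = O(n^-c). *)
Lemma remainder_expect_bound s m : 0 < s -> exists Cst, forall N,
  Rabs (binom_expect p N (fun i => pow1p_neg s (centered N i) - taylor_poly s m (centered N i)))
  <= Cst / INR (S N) ^ ((m + 1) / 2).
Proof.
  intros Hs. set (c := ((m + 1) / 2)%nat).
  destruct (even_remainder_expect_bound s c Hs) as [C0 HC0].
  destruct (mu_normalized_bound p m ltac:(lra)) as [Cm [HCm Hm]].
  exists (C0 + Rabs (taylor_coef s m) * Cm). intros N.
  set (x := centered N).
  assert (Hsplit : binom_expect p N (fun i => pow1p_neg s (x i) - taylor_poly s m (x i))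
    = binom_expect p N (fun i => pow1p_neg s (x i) - taylor_poly s (2 * c) (x i))
      + (binom_expect p N (fun i => taylor_poly s (2 * c) (x i))
         - binom_expect p N (fun i => taylor_poly s m (x i))))
    by (rewrite !binom_expect_minus; ring).
  rewrite Hsplit. eapply Rle_trans; [apply Rabs_triang|].
  rewrite Rdiv_plus_distr. apply Rplus_le_compat; [apply HC0|].
  unfold x. rewrite !binom_expect_taylor_poly.
  destruct (double_half_up m) as [Hc|Hc]; fold c in Hc; rewrite Hc.
  - rewrite Rminus_diag, Rabs_R0. apply Rle_mult_inv_pos.
    + apply Rmult_le_pos; [apply Rabs_pos|lra].
    + apply pow_lt, lt_0_INR; lia.
  - rewrite rsum_last, Nat.add_0_l, Rplus_comm, Rplus_minus_r, Rabs_mult.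
    unfold Rdiv at 2. rewrite Rmult_assoc.
    apply Rmult_le_compat_l; [apply Rabs_pos|apply Hm].
Qed.

Lemma f_r_expansion r N m : 0 < r ->
  f_r p r (S N)
  = INR (S N) * p / Rpower (INR N * p + 1) (r + 1)
    * (rsum 0 m (fun k => (-1) ^ k * (mu p k N / (INR N * p + 1) ^ k) * gbinom r k)
       + binom_expect p N (fun i => pow1p_neg (r + 1) (centered N i)
                                    - taylor_poly (r + 1) m (centered N i))).
Proof.
  intros Hr. pose proof (exp_pos ((r + 1) * ln (INR N * p + 1))) as Ha.
  rewrite binom_expect_minus, binom_expect_taylor_poly.
  rewrite (rsum_ext 0 m _ (fun k => taylor_coef (r + 1) k * (mu p k N / (INR N * p + 1) ^ k)))
    by (intros; rewrite taylor_coef_gbinom; ring).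
  rewrite (binom_expect_ext p N _ (fun i => Rpower (INR N * p + 1) (r + 1)
                                           * / Rpower (INR i + 1) (r + 1)))
    by (intros; apply pow1p_neg_centered).
  rewrite binom_expect_scal, f_r_binom_expect. unfold Rpower in *. field. lra.
Qed.

End Centered.

Lemma Rceil_half k : Rceil (INR k / 2) = Z.of_nat ((k + 1) / 2).
Proof.
  unfold Rceil. set (c := ((k + 1) / 2)%nat).
  assert (Hc : INR k / 2 <= INR c < INR k / 2 + 1).
  { pose proof (double_half_up k) as H. fold c in H.
    destruct H as [H|H]; apply (f_equal INR) in H; rewrite mult_INR in H;
      rewrite ?S_INR in H; simpl in H; lra. }
  assert (Hu : up (- (INR k / 2)) = (1 - Z.of_nat c)%Z).
  { symmetry. apply tech_up; rewrite minus_IZR, <- INR_IZR_INZ; simpl (IZR 1); lra. }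
  rewrite Hu. lia.
Qed.

Lemma powerRZ_opp_nat x c : powerRZ x (- Z.of_nat c) = / x ^ c.
Proof. rewrite powerRZ_neg', <- pow_powerRZ. reflexivity. Qed.

Theorem theorem1 (p r : R) (hp0 : 0 < p) (hp1 : p < 1) (hr : 0 < r) :
  (forall m : nat, (1 <= m)%nat ->
     exists (Cst : R) (N0 : nat), forall n : nat, (N0 <= n)%nat ->
       exists e : R,
         Rabs e <= Cst * powerRZ (INR n) (- Rceil (INR m / 2)) /\
         f_r p r n =
           INR n * p / Rpower (INR n * p + (1 - p)) (r + 1) *
           (rsum 0 m (fun k => (-1) ^ k * (mu p k (n - 1) / (INR n * p + (1 - p)) ^ k)
                                 * gbinom r k) + e))
  /\
  (forall k : nat,
     exists (Cst : R) (N0 : nat), forall n : nat, (N0 <= n)%nat ->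
       Rabs (mu p k (n - 1) / (INR n * p + (1 - p)) ^ k)
         <= Cst * powerRZ (INR n) (- Rceil (INR k / 2))).
Proof.
  assert (Hscale : forall N, INR (S N) * p + (1 - p) = INR N * p + 1)
    by (intros; rewrite S_INR; ring).
  split.
  - intros m _. destruct (remainder_expect_bound p hp0 ltac:(lra) (r + 1) m ltac:(lra)) as [Cst HC].
    exists Cst, 1%nat. intros [|N] Hn; [lia|].
    rewrite Rceil_half, powerRZ_opp_nat, Hscale, Nat.sub_1_r. simpl Nat.pred.
    eexists. split; [apply HC|]. apply f_r_expansion; lra.
  - intros k. destruct (mu_normalized_bound p k ltac:(lra)) as [Cst [_ HC]].
    exists Cst, 1%nat. intros [|N] Hn; [lia|].
    rewrite Rceil_half, powerRZ_opp_nat, Hscale, Nat.sub_1_r. apply HC.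
Qed.
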